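(* Let $k_1,k_2$ be positive integers with $k_1<k_2\le2k_1$, and set $\delta=k_2-k_1$. Let $\digamma_{k_1}^{k_2}$ be the $(\delta+1)\times(\delta+1)$ matrix whose $(i,j)$ entry is $\frac{1}{(k_1-i+j)!}$ for $1\le i,j\le\delta+1$. Then $$\det(\digamma_{k_1}^{k_2})=\frac{\delta!\,(\delta-1)!\cdots1!}{k_2!\,(k_2-1)!\cdots k_1!};$$ in particular $\digamma_{k_1}^{k_2}$ is invertible. *)

From mathcomp Require Import all_boot all_algebra.
Set Implicit Arguments. Unset Strict Implicit. Unset Printing Implicit Defensive.
Import GRing.Theory Num.Theory.
Local Open Scope ring_scope.

(* digamma k1 k2 : the (delta+1)x(delta+1) matrix over rat, delta = k2 - k1,
   entry (i,j) (0-indexed here; 1-indexed in the paper, the shift cancels)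
   equal to 1 / (k1 - i + j)!.  We write k1 + j - i in nat, which equals
   k1 - i + j whenever i <= k1 (true since i <= delta <= k1). *)
Definition digamma (k1 k2 : nat) : 'M[rat]_((k2 - k1).+1) :=
  \matrix_(i < (k2 - k1).+1, j < (k2 - k1).+1) ((k1 + j - i)`!%:R)^-1.

From mathcomp Require Import all_boot all_algebra.
From mathcomp Require Import zify.
Import GRing.Theory Num.Theory.
Local Open Scope ring_scope.

(* The matrix (1/(a+j-i)!)_{i,j<n} factors as L V D, with L the lower
   unitriangular matrix of coefficients of the falling factorial polynomials
   X(X-1)...(X-i+1), V the Vandermonde matrix of the nodes a, ..., a+n-1 and
   D = diag(1/(a+j)!), because (a+j)^_i / (a+j)! = 1/(a+j-i)!.  Hence the
   determinant is det V / prod_j (a+j)!, and det V = prod_{i<j} (j-i)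
   = 0! 1! ... (n-1)!. *)
Lemma prod_subn_gt_fact (n i : nat) :
  (\prod_(j < n | i < j) (j - i) = (n - i.+1)`!)%N.
Proof.
elim: n => [|n IHn]; first by rewrite big_ord0.
rewrite big_mkcond big_ord_recr /= -big_mkcond IHn.
case: (ltnP i n) => [lt_in | le_ni].
  by rewrite subSS -(subnSK lt_in) factS mulnC.
by rewrite muln1 subSS; congr _`!; lia.
Qed.

Lemma prod_subn_lt_prod_fact (n : nat) :
  (\prod_(i < n) \prod_(j < n | i < j) (j - i) = \prod_(i < n) i`!)%N.
Proof.
rewrite (reindex_inj rev_ord_inj) /=.
by apply: eq_bigr => i _; rewrite prod_subn_gt_fact subnSK // subKn // ltnW.
Qed.

Lemma det_Vandermonde_arith (R : comNzRingType) (n : nat) (a : R) :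
  \det (Vandermonde n (\row_(j < n) (a + j%:R))) = (\prod_(i < n) i`!)%:R.
Proof.
rewrite det_Vandermonde -(prod_subn_lt_prod_fact n) natr_prod.
apply: eq_bigr => i _; rewrite natr_prod; apply: eq_bigr => j lt_ij.
by rewrite !mxE natrB ?(ltnW lt_ij) // opprD addrACA subrr add0r.
Qed.

Definition ffactX (R : nzRingType) (i : nat) : {poly R} :=
  \prod_(t <- iota 0 i) ('X - t%:R%:P).

Section FallingFactorialPolynomial.
Variable R : comNzRingType.

Lemma size_ffactX (i : nat) : size (ffactX R i) = i.+1.
Proof. by rewrite size_prod_XsubC size_iota. Qed.

Lemma lead_coef_ffactX (i : nat) : lead_coef (ffactX R i) = 1.
Proof. exact: lead_coef_prod_XsubC. Qed.

Lemma ffactX_nat (m i : nat) : (i <= m)%N -> (ffactX R i).[m%:R] = (m ^_ i)%:R.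
Proof.
move=> le_im; rewrite horner_prod ffact_prod natr_prod.
rewrite -(big_mkord xpredT (fun t => (m - t)%:R)) /index_iota subn0.
rewrite big_seq [RHS]big_seq; apply: eq_bigr => t.
rewrite mem_iota add0n => /andP[_ lt_ti].
by rewrite hornerXsubC natrB // ltnW // (leq_trans lt_ti).
Qed.

Definition ffactX_coef_mx (n : nat) : 'M[R]_n :=
  \matrix_(i < n, k < n) (ffactX R i)`_k.

Lemma det_ffactX_coef_mx (n : nat) : \det (ffactX_coef_mx n) = 1.
Proof.
rewrite det_trig; last first.
  apply/is_trig_mxP => i k lt_ik.
  by rewrite mxE nth_default // size_ffactX.
apply: big1 => i _; rewrite mxE.
by rewrite -(lead_coef_ffactX i) lead_coefE size_ffactX.
Qed.

End FallingFactorialPolynomial.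

Section InverseFactorialToeplitz.
Variable R : numFieldType.

Definition inv_fact_toeplitz (n a : nat) : 'M[R]_n :=
  \matrix_(i < n, j < n) ((a + j - i)`!%:R)^-1.

Lemma inv_fact_toeplitz_factor (n a : nat) : (n <= a.+1)%N ->
  inv_fact_toeplitz n a =
    ffactX_coef_mx R n *m Vandermonde n (\row_(j < n) (a%:R + j%:R))
    *m diag_mx (\row_(j < n) ((a + j)`!%:R)^-1).
Proof.
move=> le_na; apply/matrixP => i j; rewrite mul_mx_diag !mxE.
under eq_bigr do rewrite !mxE -natrD.
rewrite -(@horner_coef_wide _ n) ?size_ffactX //.
have le_i_aj : (i <= a + j)%N by have := ltn_ord i; lia.
rewrite ffactX_nat // -(ffact_fact le_i_aj) natrM invfM mulrA divff ?mul1r //.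
by rewrite pnatr_eq0 -lt0n ffact_gt0.
Qed.

Lemma det_inv_fact_toeplitz (n a : nat) : (n <= a.+1)%N ->
  \det (inv_fact_toeplitz n a) =
    (\prod_(i < n) i`!)%:R / (\prod_(j < n) (a + j)`!)%:R.
Proof.
move=> le_na; rewrite inv_fact_toeplitz_factor // !det_mulmx.
rewrite det_ffactX_coef_mx det_Vandermonde_arith mul1r det_diag.
by congr (_ * _); rewrite natr_prod -prodfV; apply: eq_bigr => j _; rewrite mxE.
Qed.

Lemma inv_fact_toeplitz_unit (n a : nat) : (n <= a.+1)%N ->
  inv_fact_toeplitz n a \in unitmx.
Proof.
move=> le_na; rewrite unitmxE unitfE det_inv_fact_toeplitz //.
by apply: mulf_neq0; rewrite ?invr_eq0 pnatr_eq0 -lt0n prodn_gt0 // => i;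
  exact: fact_gt0.
Qed.

End InverseFactorialToeplitz.

Theorem theoremA2 (k1 k2 : nat) (hk1 : (0 < k1)%N) (hlt : (k1 < k2)%N)
  (hle : (k2 <= 2 * k1)%N) :
  \det (digamma k1 k2) =
    (\prod_(1 <= m < (k2 - k1).+1) (m`!)%:R) /
    (\prod_(k1 <= m < k2.+1) (m`!)%:R)
  /\ digamma k1 k2 \in unitmx.
Proof.
have le_na : ((k2 - k1).+1 <= k1.+1)%N by lia.
have -> : digamma k1 k2 = inv_fact_toeplitz rat (k2 - k1).+1 k1 by [].
split; last exact: inv_fact_toeplitz_unit.
rewrite det_inv_fact_toeplitz // !natr_prod; congr (_ / _).
  by rewrite -(big_mkord xpredT (fun i => (i`!)%:R)) big_ltn // fact0 mul1r.
rewrite -(big_mkord xpredT (fun j => ((k1 + j)`!)%:R)) -[in RHS](add0n k1) big_addn.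
have -> : (k2.+1 - k1 = (k2 - k1).+1)%N by lia.
by apply: eq_bigr => j _; rewrite addnC.
Qed.
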